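(* Let $x,y\in\mathbb{B}^2\setminus\{0\}$ be such that $0,x,y$ are noncollinear and $|x|\ne|y|$. Let $S^1(a,r_a)$ be the circle through $x,y,x^*,y^*$, where $a=i\frac{y(1+|x|^2)-x(1+|y|^2)}{2(x_2y_1-x_1y_2)}$, $r_a=\frac{|x-y|\,\big|x|y|^2-y\big|}{2|y||x_1y_2-x_2y_1|}$ (with $x=x_1+ix_2$, $y=y_1+iy_2$); it is orthogonal to $S^1$. Let $\{x_*,y_*\}=S^1\cap S^1(a,r_a)$, labelled so that $x_*,x,y,y_*$ occur in this order on the arc of $S^1(a,r_a)$ inside $\overline{\mathbb{B}^2}$. Let $w=L(x,y)\cap L(x^*,y^* )$, $u=L(x,y^* )\cap L(y,x^* )$, $v=L(x,x_* )\cap L(y,y_* )$, $s=L(x,y_* )\cap L(y,x_* )$, $t=L(x_*,y^* )\cap L(y_*,x^* )$, $k=L(x_*,x^* )\cap L(y_*,y^* )$. Let $S^1(w,r_w)$ be the circle centred at $w$ orthogonal to $S^1(a,r_a)$, and let $z$ be the point of $S^1(w,r_w)\cap S^1(a,r_a)$ in $\mathbb{B}^2$. Then: (1) the circle $S^1(w,r_w)$ is orthogonal to $S^1$, $z$ is the hyperbolic midpoint of the hyperbolic segment $J[x,y]$, and $$w=\frac{y(1-|x|^2)-x(1-|y|^2)}{|y|^2-|x|^2},\qquad r_w=\frac{|x-y|\sqrt{(1-|x|^2)(1-|y|^2)}}{\big||y|^2-|x|^2\big|};$$ (2) the points $v,s,t,k$ lie on the line $L(0,z)$, and $u$ is the intersection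 point of the lines $L(0,z)$ and $L(x_*,y_* )$, where $$u=\frac{y(1-|x|^2)+x(1-|y|^2)}{1-|x|^2|y|^2}.$$
   Context: $\mathbb{B}^2$ is the unit disk, $S^1$ the unit circle, $S^1(c,r)$ the circle with centre $c$ and radius $r$, $L(p,q)$ the line through $p,q$. For $x\ne0$, $x^*=x/|x|^2$ is the inversion of $x$ in $S^1$. Points are identified with complex numbers. The hyperbolic distance on $\mathbb{B}^2$ satisfies $\sinh\frac{\rho(x,y)}{2}=\frac{|x-y|}{\sqrt{1-|x|^2}\sqrt{1-|y|^2}}$; $J[x,y]$ is the arc of $S^1(a,r_a)$ between $x$ and $y$, and its hyperbolic midpoint is the $z\in J[x,y]$ with $\rho(x,z)=\rho(z,y)$. *)

From Stdlib Require Import Reals.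
From Coquelicot Require Export Coquelicot.
Open Scope R_scope.

Definition re (p : C) : R := fst p.
Definition im (p : C) : R := snd p.

Definition inv_pt (p : C) : C := (p / RtoC (Cmod p ^ 2))%C.

Definition cross (p q : C) : R := re p * im q - im p * re q.

Definition on_line (p q z : C) : Prop := cross (q - p)%C (z - p)%C = 0.

Definition on_circle (c : C) (r : R) (z : C) : Prop := Cmod (z - c)%C = r.

Definition orthogonal (c1 : C) (r1 : R) (c2 : C) (r2 : R) : Prop :=
  Cmod (c1 - c2)%C ^ 2 = r1 ^ 2 + r2 ^ 2.

Definition arsinh (t : R) : R := ln (t + sqrt (t ^ 2 + 1)).

(* hyperbolic distance on the unit disk:
   sinh (rho(x,y)/2) = |x-y| / (sqrt(1-|x|^2) sqrt(1-|y|^2)) *)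
Definition hdist (x y : C) : R :=
  2 * arsinh (Cmod (x - y)%C / (sqrt (1 - Cmod x ^ 2) * sqrt (1 - Cmod y ^ 2))).

(* the centre a and radius r_a of the circle through x, y, x*, y* *)
Definition center_a (x y : C) : C :=
  (Ci * (y * RtoC (1 + Cmod x ^ 2) - x * RtoC (1 + Cmod y ^ 2))
     / RtoC (2 * (im x * re y - re x * im y)))%C.

Definition radius_a (x y : C) : R :=
  Cmod (x - y)%C * Cmod (x * RtoC (Cmod y ^ 2) - y)%C
    / (2 * Cmod y * Rabs (re x * im y - im x * re y)).

(* J[p,q]: the closed arc of the circle S^1(c,r) (orthogonal to S^1) between
   p and q, inside the unit disk.  On this minor arc, z lies between p and q
   iff its chordal distances to p and q do not exceed |p - q|. *)
Definition on_J (c : C) (r : R) (p q z : C) : Prop :=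
  on_circle c r z /\ Cmod z < 1 /\
  Cmod (z - p)%C <= Cmod (q - p)%C /\ Cmod (z - q)%C <= Cmod (q - p)%C.

Definition hyp_midpoint (c : C) (r : R) (p q z : C) : Prop :=
  on_J c r p q z /\ hdist p z = hdist z q.

(* p1, p2, p3, p4 occur in this order on a minor circular arc starting at p1:
   the chordal distance from p1 increases strictly along the arc. *)
Definition arc_order4 (p1 p2 p3 p4 : C) : Prop :=
  Cmod (p2 - p1)%C < Cmod (p3 - p1)%C /\ Cmod (p3 - p1)%C < Cmod (p4 - p1)%C.

From Stdlib Require Import Reals Lra Psatz.
From Coquelicot Require Import Coquelicot.
Open Scope R_scope.

(* S^1(a,r_a) is orthogonal to S^1, so the power of p with respect to it is
   |p|^2 - 2 p.a + 1 and the polar of q is {p | p.q - p.a - q.a + 1 = 0}; it is mapped to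
   itself by inversion in S^1.  The two diagonal points of a quadrangle inscribed in a circle
   are conjugate with respect to it.  A direct computation gives w.a = u.a = u.w = 1, so w and u
   lie on the line {p | p.a = 1} through x_* and y_*, and the polar of w is the line through 0 perpendicular
   to w - a.  It contains u, the points v, s, t, k (diagonal points of inscribed quadrangles
   whose other diagonal point is w), and z, which lies on the radical axis of S^1(a,r_a) and
   S^1(w,r_w).  On S^1(w,r_w) Apollonius' relation |x-z|^2 (1-|y|^2) = |y-z|^2 (1-|x|^2) holds,
   i.e. rho(x,z) = rho(z,y).  Finally z = l u, where l is the smaller root of
   |u|^2 l^2 - 2 l + 1; comparing l with (1-|x|^2|y|^2)/(2-|x|^2-|y|^2) shows that the angle
   x z y is obtuse, so z lies on J[x,y]. *)

Lemma re_add (p q : C) : re (p + q)%C = re p + re q. Proof. reflexivity. Qed.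
Lemma im_add (p q : C) : im (p + q)%C = im p + im q. Proof. reflexivity. Qed.
Lemma re_sub (p q : C) : re (p - q)%C = re p - re q. Proof. reflexivity. Qed.
Lemma im_sub (p q : C) : im (p - q)%C = im p - im q. Proof. reflexivity. Qed.
Lemma re_scal (t : R) (p : C) : re (RtoC t * p)%C = t * re p.
Proof. unfold re; simpl; ring. Qed.
Lemma im_scal (t : R) (p : C) : im (RtoC t * p)%C = t * im p.
Proof. unfold im; simpl; ring. Qed.
Lemma re_mulR (p : C) (t : R) : re (p * RtoC t)%C = re p * t.
Proof. unfold re; simpl; ring. Qed.
Lemma im_mulR (p : C) (t : R) : im (p * RtoC t)%C = im p * t.
Proof. unfold im; simpl; ring. Qed.
Lemma re_Ci_mul (p : C) : re (Ci * p)%C = - im p.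
Proof. unfold re, im; simpl; ring. Qed.
Lemma im_Ci_mul (p : C) : im (Ci * p)%C = re p.
Proof. unfold re, im; simpl; ring. Qed.
Lemma re_0 : re 0%C = 0. Proof. reflexivity. Qed.
Lemma im_0 : im 0%C = 0. Proof. reflexivity. Qed.

(* Unconditional, because [/ 0 = 0] on both sides. *)
Lemma re_divR (p : C) (t : R) : re (p / RtoC t)%C = re p / t.
Proof.
  unfold re; simpl; destruct (Req_dec t 0) as [->|Ht].
  - unfold Rdiv; rewrite ?Rmult_0_l, ?Rplus_0_l, ?Rinv_0; ring.
  - field; exact Ht.
Qed.
Lemma im_divR (p : C) (t : R) : im (p / RtoC t)%C = im p / t.
Proof.
  unfold im; simpl; destruct (Req_dec t 0) as [->|Ht].
  - unfold Rdiv; rewrite ?Rmult_0_l, ?Rplus_0_l, ?Rinv_0; ring.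
  - field; exact Ht.
Qed.

Lemma Cmod_sq (p : C) : Cmod p ^ 2 = re p ^ 2 + im p ^ 2.
Proof. unfold Cmod, re, im; rewrite pow2_sqrt; [ring | nra]. Qed.

Create HintDb coord.
#[local] Hint Rewrite re_add im_add re_sub im_sub re_scal im_scal re_mulR im_mulR
  re_Ci_mul im_Ci_mul re_0 im_0 re_divR im_divR Cmod_sq : coord.

Lemma C_ext (p q : C) : re p = re q -> im p = im q -> p = q.
Proof. destruct p, q; unfold re, im; simpl; intros -> ->; reflexivity. Qed.

Lemma neq_of_Cmod (p q : C) : Cmod p <> Cmod q -> p <> q.
Proof. congruence. Qed.

Lemma Cmod_inv_pt (p : C) : Cmod (inv_pt p) = / Cmod p.
Proof.
  unfold inv_pt; destruct (Ceq_dec p 0) as [->|Hp].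
  - rewrite Cmod_0, Rinv_0; unfold Cdiv; now rewrite Cmult_0_l, Cmod_0.
  - rewrite Cmod_div, Cmod_R, Rabs_pos_eq.
    + pose proof (Cmod_gt_0 p) as H; field; apply Rgt_not_eq, H, Hp.
    + apply pow_le, Cmod_ge_0.
    + intro E; apply RtoC_inj in E; revert E; apply pow_nonzero.
      intro E; apply Hp, Cmod_eq_0, E.
Qed.

Lemma inv_Cmod_gt1 (p : C) : p <> 0%C -> Cmod p < 1 -> 1 < / Cmod p.
Proof.
  intros Hp H; rewrite <- Rinv_1; apply Rinv_lt_contravar; [|exact H].
  apply Cmod_gt_0 in Hp; lra.
Qed.

Definition dot (p q : C) : R := re p * re q + im p * im q.

(* For a circle S^1(a,r) orthogonal to S^1, i.e. r^2 = |a|^2 - 1, [polar_form a p p]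
   is the power |p - a|^2 - r^2 of p, and [polar_form a q p = 0] is the polar of q. *)
Definition polar_form (a p q : C) : R := dot p q - dot p a - dot q a + 1.

Lemma dot_comm (p q : C) : dot p q = dot q p.
Proof. unfold dot; ring. Qed.

Lemma Cmod_sq_dot (p : C) : Cmod p ^ 2 = dot p p.
Proof. rewrite Cmod_sq; unfold dot; ring. Qed.

Lemma dot_self_lt1 (p : C) : Cmod p < 1 -> dot p p < 1.
Proof. intros H; rewrite <- Cmod_sq_dot; pose proof (Cmod_ge_0 p); nra. Qed.

Lemma dot_lt1 (p q : C) : Cmod p < 1 -> Cmod q < 1 -> dot p q < 1.
Proof.
  intros Hp Hq; apply dot_self_lt1 in Hp, Hq.
  assert (0 <= dot (p - q) (p - q)) by (unfold dot; nra).
  unfold dot in *; autorewrite with coord in *; nra.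
Qed.

Lemma dot_prod_lt1 (p q : C) : Cmod p < 1 -> Cmod q < 1 -> dot p p * dot q q < 1.
Proof.
  intros Hp Hq; apply dot_self_lt1 in Hp, Hq.
  assert (0 <= dot p p) by (unfold dot; nra); assert (0 <= dot q q) by (unfold dot; nra); nra.
Qed.

Lemma dot_neq_of_Cmod (p q : C) : Cmod p <> Cmod q -> dot p p <> dot q q.
Proof.
  intros H E; apply H, Rsqr_inj; try apply Cmod_ge_0.
  now rewrite !Rsqr_pow2, !Cmod_sq_dot.
Qed.

Lemma dot_pos (p : C) : p <> 0%C -> 0 < dot p p.
Proof.
  intros Hp; unfold dot; destruct (Req_dec (re p) 0) as [Hr|Hr].
  - destruct (Req_dec (im p) 0) as [Hi|Hi]; [|nra].
    now exfalso; apply Hp, C_ext; rewrite ?re_0, ?im_0.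
  - nra.
Qed.

Lemma dot_sub_pos (p q : C) : p <> q -> 0 < dot (q - p) (q - p).
Proof.
  intros Hpq; apply dot_pos; intro E; apply Hpq.
  replace q with (q - p + p)%C by ring; rewrite E; ring.
Qed.

Lemma polar_form_on_circle (a p : C) (r : R) :
  r ^ 2 = dot a a - 1 -> on_circle a r p -> polar_form a p p = 0.
Proof.
  unfold on_circle, polar_form, dot; intros Hr Hp.
  assert (E : Cmod (p - a) ^ 2 = r ^ 2) by now rewrite Hp.
  autorewrite with coord in E; lra.
Qed.

Lemma polar_form_inv_pt (a p : C) : p <> 0%C ->
  polar_form a p p = 0 -> polar_form a (inv_pt p) (inv_pt p) = 0.
Proof.
  intros Hp H; pose proof (dot_pos p Hp) as Hpp.
  transitivity (polar_form a p p / dot p p); [|rewrite H; unfold Rdiv; ring].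
  unfold inv_pt, polar_form, dot in *; autorewrite with coord; field; lra.
Qed.

Lemma dot_center_of_unit (a p : C) : Cmod p = 1 -> polar_form a p p = 0 -> dot p a = 1.
Proof.
  intros H1 H; pose proof (Cmod_sq_dot p) as E; rewrite H1 in E.
  unfold polar_form in H; lra.
Qed.

Lemma polar_form_affine_r (a w p q : C) (t : R) :
  polar_form a w (p + RtoC t * (q - p)) = (1 - t) * polar_form a w p + t * polar_form a w q.
Proof. unfold polar_form, dot; autorewrite with coord; ring. Qed.

Lemma power_affine (a p q : C) (t : R) :
  polar_form a (p + RtoC t * (q - p)) (p + RtoC t * (q - p))
  = (1 - t) ^ 2 * polar_form a p p + 2 * t * (1 - t) * polar_form a p q
    + t ^ 2 * polar_form a q q.
Proof. unfold polar_form, dot; autorewrite with coord; ring. Qed.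

Lemma polar_form_chord (a p q : C) :
  polar_form a p p + polar_form a q q - 2 * polar_form a p q = dot (q - p) (q - p).
Proof. unfold polar_form, dot; autorewrite with coord; ring. Qed.

Lemma on_line_0 (p q : C) : on_line 0 p q <-> cross p q = 0.
Proof. unfold on_line, cross; autorewrite with coord; now rewrite !Rminus_0_r. Qed.

Lemma on_line_swap (p q z : C) : on_line p q z -> on_line q p z.
Proof. unfold on_line, cross; autorewrite with coord; lra. Qed.

Lemma parallel_component (d1 d2 e1 e2 : R) :
  d1 * e2 - d2 * e1 = 0 -> 0 < d1 * d1 + d2 * d2 ->
  e1 = (e1 * d1 + e2 * d2) / (d1 * d1 + d2 * d2) * d1 /\
  e2 = (e1 * d1 + e2 * d2) / (d1 * d1 + d2 * d2) * d2.
Proof.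
  intros H Hd; split; apply (Rmult_eq_reg_r (d1 * d1 + d2 * d2)); try lra;
    field_simplify; try lra.
  - transitivity (e1 * d1 ^ 2 + e2 * d1 * d2 - d2 * (d1 * e2 - d2 * e1)); [ring|].
    rewrite H; ring.
  - transitivity (e1 * d1 * d2 + e2 * d2 ^ 2 + d1 * (d1 * e2 - d2 * e1)); [ring|].
    rewrite H; ring.
Qed.

Lemma on_line_param (p q z : C) : p <> q -> on_line p q z ->
  exists t, z = (p + RtoC t * (q - p))%C.
Proof.
  intros Hpq Hl; pose proof (dot_sub_pos p q Hpq) as Hd.
  unfold on_line, cross, dot in *; autorewrite with coord in *.
  destruct (parallel_component _ _ _ _ Hl Hd) as [E1 E2].
  eexists; apply C_ext; autorewrite with coord; [rewrite <- E1 | rewrite <- E2]; ring.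
Qed.

Lemma cross_indep (d1 d2 e : C) :
  cross d1 d2 <> 0 -> cross d1 e = 0 -> cross d2 e = 0 -> e = 0%C.
Proof.
  intros H H1 H2; apply C_ext; rewrite ?re_0, ?im_0;
    apply (Rmult_eq_reg_r (cross d1 d2)); try exact H.
  - transitivity (re d2 * cross d1 e - re d1 * cross d2 e); [unfold cross; ring|].
    rewrite H1, H2; ring.
  - transitivity (im d2 * cross d1 e - im d1 * cross d2 e); [unfold cross; ring|].
    rewrite H1, H2; ring.
Qed.

Lemma line_inter_unique (p1 q1 p2 q2 z z' : C) : cross (q1 - p1) (q2 - p2) <> 0 ->
  on_line p1 q1 z -> on_line p2 q2 z -> on_line p1 q1 z' -> on_line p2 q2 z' -> z = z'.
Proof.
  unfold on_line; intros H H1 H2 H1' H2'.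
  replace z with (z - z' + z')%C by ring.
  rewrite (cross_indep _ _ (z - z') H); [ring| |].
  - transitivity (cross (q1 - p1) (z - p1) - cross (q1 - p1) (z' - p1)).
    + unfold cross; autorewrite with coord; ring.
    + rewrite H1, H1'; ring.
  - transitivity (cross (q2 - p2) (z - p2) - cross (q2 - p2) (z' - p2)).
    + unfold cross; autorewrite with coord; ring.
    + rewrite H2, H2'; ring.
Qed.

Lemma combination_eq0 (p1 p2 p3 : C) (c2 c3 : R) : ~ on_line p1 p2 p3 ->
  (RtoC c2 * (p2 - p1) + RtoC c3 * (p3 - p1))%C = 0%C -> c2 = 0 /\ c3 = 0.
Proof.
  unfold on_line; set (d2 := (p2 - p1)%C); set (d3 := (p3 - p1)%C); intros Hnc E.
  assert (K : forall d, c2 * cross d d2 + c3 * cross d d3 = 0).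
  { intro d; transitivity (cross d (RtoC c2 * d2 + RtoC c3 * d3)%C).
    - unfold cross; autorewrite with coord; ring.
    - rewrite E; unfold cross; rewrite re_0, im_0; ring. }
  assert (K2 : c2 * cross d2 d3 = 0).
  { transitivity (- (c2 * cross d3 d2 + c3 * cross d3 d3)); [unfold cross; ring|].
    rewrite K; ring. }
  assert (K3 : c3 * cross d2 d3 = 0).
  { transitivity (c2 * cross d2 d2 + c3 * cross d2 d3); [unfold cross; ring|].
    apply K. }
  apply Rmult_integral in K2, K3; tauto.
Qed.

Lemma cross_eq0_of_dot_eq0 (p q n : C) : n <> 0%C -> dot p n = 0 -> dot q n = 0 -> cross p q = 0.
Proof.
  intros Hn Hp Hq; apply (Rmult_eq_reg_r (dot n n)); [|apply Rgt_not_eq, dot_pos, Hn].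
  transitivity (re n * (im q * dot p n - im p * dot q n) + im n * (re p * dot q n - re q * dot p n)).
  - unfold cross, dot; ring.
  - rewrite Hp, Hq; ring.
Qed.

Lemma on_line_0_of_polar (a w p q : C) : dot w a = 1 -> w <> a ->
  polar_form a w p = 0 -> polar_form a w q = 0 -> on_line 0 p q.
Proof.
  intros Hw Hwa Hp Hq; apply on_line_0, (cross_eq0_of_dot_eq0 _ _ (w - a)).
  - intro E; apply Hwa; replace w with (w - a + a)%C by ring; rewrite E; ring.
  - unfold polar_form, dot in *; autorewrite with coord; lra.
  - unfold polar_form, dot in *; autorewrite with coord; lra.
Qed.

Lemma on_line_of_dot_eq (a p q r : C) : a <> 0%C ->
  dot p a = 1 -> dot q a = 1 -> dot r a = 1 -> on_line p q r.
Proof.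
  intros Ha Hp Hq Hr; apply (cross_eq0_of_dot_eq0 _ _ a Ha);
    unfold dot in *; autorewrite with coord; lra.
Qed.

Lemma concyclic_not_collinear (a p1 p2 p3 : C) :
  polar_form a p1 p1 = 0 -> polar_form a p2 p2 = 0 -> polar_form a p3 p3 = 0 ->
  p1 <> p2 -> p1 <> p3 -> p2 <> p3 -> ~ on_line p1 p2 p3.
Proof.
  intros H1 H2 H3 H12 H13 H23 Hl.
  destruct (on_line_param _ _ _ H12 Hl) as [t ->].
  pose proof (dot_sub_pos p1 p2 H12) as Hd.
  assert (Ht : t * (1 - t) * dot (p2 - p1) (p2 - p1) = 0).
  { rewrite <- (polar_form_chord a), H1, H2.
    pose proof (power_affine a p1 p2 t) as E; rewrite H1, H2, H3 in E; lra. }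
  apply Rmult_integral in Ht as [Ht|]; [|lra].
  apply Rmult_integral in Ht as [->|Ht].
  - apply H13; ring.
  - apply H23; replace t with 1 by lra; ring.
Qed.

Lemma polar_form_sym (a p q : C) : polar_form a p q = polar_form a q p.
Proof. unfold polar_form, dot; ring. Qed.

Lemma quadrangle_parameters (p1 p2 p3 p4 : C) (sg ta la mu : R) : ~ on_line p1 p2 p3 ->
  (p1 + RtoC sg * (p3 - p1))%C = (p2 + RtoC ta * (p4 - p2))%C ->
  (p1 + RtoC la * (p2 - p1))%C = (p3 + RtoC mu * (p4 - p3))%C ->
  ta * (1 - la) = mu * (1 - sg) /\ ta * la = - mu * (1 - ta).
Proof.
  intros Hnc Ew EP.
  destruct (combination_eq0 p1 p2 p3 (- mu * (1 - ta) - ta * la) (mu * sg + ta * (1 - mu)) Hnc);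
    [|split; lra].
  (* p4 cancels from mu (w - p2) - ta (P - p3) - mu ta (p3 - p2) *)
  transitivity (RtoC mu * (p1 + RtoC sg * (p3 - p1) - p2)
                - RtoC ta * (p1 + RtoC la * (p2 - p1) - p3) - RtoC mu * RtoC ta * (p3 - p2))%C.
  - repeat rewrite ?RtoC_mult, ?RtoC_minus, ?RtoC_plus, ?RtoC_opp; ring.
  - rewrite Ew, EP; ring.
Qed.

Lemma polar_form_diagonal_points (a w P p1 p2 p3 p4 : C) :
  polar_form a p1 p1 = 0 -> polar_form a p2 p2 = 0 ->
  polar_form a p3 p3 = 0 -> polar_form a p4 p4 = 0 ->
  p1 <> p2 -> p1 <> p3 -> p2 <> p3 -> p2 <> p4 -> p3 <> p4 ->
  on_line p1 p3 w -> on_line p2 p4 w -> on_line p1 p2 P -> on_line p3 p4 P ->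
  polar_form a w P = 0.
Proof.
  intros H1 H2 H3 H4 H12 H13 H23 H24 H34 Hw13 Hw24 HP12 HP34.
  assert (Hnc : ~ on_line p1 p2 p3) by (apply (concyclic_not_collinear a); auto).
  destruct (on_line_param _ _ _ H13 Hw13) as [sg Ew13].
  destruct (on_line_param _ _ _ H24 Hw24) as [ta Ew24].
  destruct (on_line_param _ _ _ H12 HP12) as [la EP12].
  destruct (on_line_param _ _ _ H34 HP34) as [mu EP34].
  destruct (quadrangle_parameters p1 p2 p3 p4 sg ta la mu Hnc) as [h1 h2];
    [congruence | congruence |].
  assert (Hta : ta <> 0).
  { intros ->; apply Hnc.
    assert (Ep2 : p2 = (p1 + RtoC sg * (p3 - p1))%C) by (rewrite <- Ew13, Ew24; ring).
    unfold on_line, cross; rewrite Ep2; autorewrite with coord; ring. }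
  assert (Hw1 : polar_form a w p1 = sg * polar_form a p1 p3)
    by (rewrite polar_form_sym, Ew13, polar_form_affine_r, H1; ring).
  assert (Hw2 : polar_form a w p2 = ta * polar_form a p2 p4)
    by (rewrite polar_form_sym, Ew24, polar_form_affine_r, H2; ring).
  (* the power of w computed along both diagonals *)
  assert (Hww : sg * (1 - sg) * polar_form a p1 p3 = ta * (1 - ta) * polar_form a p2 p4).
  { pose proof (power_affine a p1 p3 sg) as E13; pose proof (power_affine a p2 p4 ta) as E24.
    rewrite <- Ew13, H1, H3 in E13; rewrite <- Ew24, H2, H4 in E24; lra. }
  apply (Rmult_eq_reg_l ta); [|exact Hta].
  rewrite EP12, polar_form_affine_r, Hw1, Hw2, Rmult_0_r.
  transitivity (sg * polar_form a p1 p3 * (ta * (1 - la))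
                + ta * polar_form a p2 p4 * (ta * la)); [ring|].
  rewrite h1, h2.
  transitivity (mu * (sg * (1 - sg) * polar_form a p1 p3 - ta * (1 - ta) * polar_form a p2 p4));
    [ring|].
  rewrite Hww; ring.
Qed.

Lemma smaller_root_le (c l m : R) : 0 <= c -> c * l ^ 2 - 2 * l + 1 = 0 -> c * l ^ 2 < 1 ->
  c * m ^ 2 - 2 * m + 1 <= 0 -> l <= m.
Proof.
  intros Hc Hl Hl1 Hm.
  assert (Hl0 : 0 < l) by nra.
  assert (Hcl : c * l < 1) by nra.
  destruct (Rle_lt_dec l m) as [|Hlt]; [assumption|exfalso].
  assert (E : (c * m ^ 2 - 2 * m + 1) - (c * l ^ 2 - 2 * l + 1) = (m - l) * (c * (m + l) - 2)) by ring.
  assert (c * (m + l) - 2 < 0) by nra.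
  nra.
Qed.

Lemma chord_le_of_obtuse (x y z : C) : dot (x - z) (y - z) <= 0 ->
  Cmod (z - x) <= Cmod (y - x) /\ Cmod (z - y) <= Cmod (y - x).
Proof.
  intros H.
  assert (E : Cmod (y - x) ^ 2 = Cmod (z - x) ^ 2 + Cmod (z - y) ^ 2 - 2 * dot (x - z) (y - z))
    by (unfold dot; autorewrite with coord; ring).
  pose proof (pow2_ge_0 (Cmod (z - x))); pose proof (pow2_ge_0 (Cmod (z - y))).
  split; apply Rsqr_incr_0_var; try apply Cmod_ge_0; rewrite !Rsqr_pow2; lra.
Qed.

Lemma hdist_eq_of_apollonius (x y z : C) :
  Cmod x < 1 -> Cmod y < 1 -> Cmod z < 1 ->
  Cmod (x - z) ^ 2 * (1 - Cmod y ^ 2) = Cmod (z - y) ^ 2 * (1 - Cmod x ^ 2) ->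
  hdist x z = hdist z y.
Proof.
  intros Hx Hy Hz H; unfold hdist; do 2 f_equal.
  assert (Sx : 0 < sqrt (1 - Cmod x ^ 2)) by (apply sqrt_lt_R0; pose proof (Cmod_ge_0 x); nra).
  assert (Sy : 0 < sqrt (1 - Cmod y ^ 2)) by (apply sqrt_lt_R0; pose proof (Cmod_ge_0 y); nra).
  assert (Sz : 0 < sqrt (1 - Cmod z ^ 2)) by (apply sqrt_lt_R0; pose proof (Cmod_ge_0 z); nra).
  assert (E : Cmod (x - z) * sqrt (1 - Cmod y ^ 2) = Cmod (z - y) * sqrt (1 - Cmod x ^ 2)).
  { apply Rsqr_inj; try (apply Rmult_le_pos; [apply Cmod_ge_0 | lra]).
    rewrite !Rsqr_pow2, !Rpow_mult_distr, !pow2_sqrt; try lra.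
    - pose proof (Cmod_ge_0 x); nra.
    - pose proof (Cmod_ge_0 y); nra. }
  apply (Rmult_eq_reg_r (sqrt (1 - Cmod x ^ 2) * sqrt (1 - Cmod y ^ 2) * sqrt (1 - Cmod z ^ 2)));
    [|apply Rgt_not_eq; repeat apply Rmult_lt_0_compat; assumption].
  field_simplify; lra.
Qed.

Definition w_of (x y : C) : C :=
  ((y * RtoC (1 - Cmod x ^ 2) - x * RtoC (1 - Cmod y ^ 2)) / RtoC (Cmod y ^ 2 - Cmod x ^ 2))%C.

Definition u_of (x y : C) : C :=
  ((y * RtoC (1 - Cmod x ^ 2) + x * RtoC (1 - Cmod y ^ 2)) / RtoC (1 - Cmod x ^ 2 * Cmod y ^ 2))%C.

Section Configuration.

Variables x y : C.
Hypothesis hcross : cross x y <> 0.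
Hypothesis hx1 : Cmod x < 1.
Hypothesis hy1 : Cmod y < 1.
Hypothesis hxy : Cmod x <> Cmod y.

Local Notation a := (center_a x y).

Lemma x_neq0 : x <> 0%C.
Proof. intros ->; apply hcross; unfold cross; rewrite re_0, im_0; ring. Qed.

Lemma y_neq0 : y <> 0%C.
Proof. intros ->; apply hcross; unfold cross; rewrite re_0, im_0; ring. Qed.

Local Ltac config_field :=
  pose proof (dot_pos x x_neq0); pose proof (dot_pos y y_neq0);
  pose proof (dot_self_lt1 x hx1); pose proof (dot_self_lt1 y hy1); pose proof (dot_neq_of_Cmod x y hxy);
  pose proof (dot_prod_lt1 x y hx1 hy1);
  unfold cross, dot in *; autorewrite with coord; field;
  repeat split; lra.

Lemma polar_form_center_a_x : polar_form a x x = 0.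
Proof. unfold polar_form, dot, center_a; config_field. Qed.

Lemma polar_form_center_a_y : polar_form a y y = 0.
Proof. unfold polar_form, dot, center_a; config_field. Qed.

Lemma radius_a_sq : radius_a x y ^ 2 = dot a a - 1.
Proof.
  unfold radius_a, Rdiv; rewrite !Rpow_mult_distr, pow_inv, !Rpow_mult_distr, pow2_abs.
  unfold center_a; config_field.
Qed.

Lemma w_of_on_line_xy : on_line x y (w_of x y).
Proof. unfold on_line, w_of; config_field. Qed.

Lemma w_of_on_line_inv : on_line (inv_pt x) (inv_pt y) (w_of x y).
Proof. unfold on_line, w_of, inv_pt; config_field. Qed.

Lemma u_of_on_line_x_inv_y : on_line x (inv_pt y) (u_of x y).
Proof. unfold on_line, u_of, inv_pt; config_field. Qed.

Lemma u_of_on_line_y_inv_x : on_line y (inv_pt x) (u_of x y).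
Proof. unfold on_line, u_of, inv_pt; config_field. Qed.

Lemma cross_xy_inv :
  cross (y - x) (inv_pt y - inv_pt x) * (dot x x * dot y y) = cross x y * (dot y y - dot x x).
Proof. unfold inv_pt; config_field. Qed.

Lemma cross_x_inv_y :
  cross (inv_pt y - x) (inv_pt x - y) * (dot x x * dot y y) = cross x y * (dot x x * dot y y - 1).
Proof. unfold inv_pt; config_field. Qed.

Lemma w_of_unique (w : C) :
  on_line x y w -> on_line (inv_pt x) (inv_pt y) w -> w = w_of x y.
Proof.
  intros H1 H2; apply (line_inter_unique x y (inv_pt x) (inv_pt y));
    auto using w_of_on_line_xy, w_of_on_line_inv.
  intro E; pose proof cross_xy_inv as K; rewrite E, Rmult_0_l in K.
  symmetry in K; apply Rmult_integral in K as [K|K]; [exact (hcross K)|].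
  apply (dot_neq_of_Cmod x y hxy); lra.
Qed.

Lemma u_of_unique (u : C) :
  on_line x (inv_pt y) u -> on_line y (inv_pt x) u -> u = u_of x y.
Proof.
  intros H1 H2; apply (line_inter_unique x (inv_pt y) y (inv_pt x));
    auto using u_of_on_line_x_inv_y, u_of_on_line_y_inv_x.
  intro E; pose proof cross_x_inv_y as K; rewrite E, Rmult_0_l in K.
  symmetry in K; apply Rmult_integral in K as [K|K]; [exact (hcross K)|].
  pose proof (dot_prod_lt1 x y hx1 hy1); lra.
Qed.

Lemma dot_w_of_center_a : dot (w_of x y) a = 1.
Proof. unfold w_of, center_a; config_field. Qed.

Lemma dot_u_of_center_a : dot (u_of x y) a = 1.
Proof. unfold u_of, center_a; config_field. Qed.

Lemma dot_u_of_w_of : dot (u_of x y) (w_of x y) = 1.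
Proof. unfold u_of, w_of; config_field. Qed.

Lemma dot_w_of_sub1 : dot (w_of x y) (w_of x y) - 1
  = (Cmod (x - y) * sqrt ((1 - Cmod x ^ 2) * (1 - Cmod y ^ 2)) / Rabs (Cmod y ^ 2 - Cmod x ^ 2)) ^ 2.
Proof.
  unfold Rdiv; rewrite !Rpow_mult_distr, pow_inv, pow2_abs, pow2_sqrt.
  - unfold w_of; config_field.
  - rewrite !Cmod_sq_dot; pose proof (dot_self_lt1 x hx1); pose proof (dot_self_lt1 y hy1); nra.
Qed.

Lemma apollonius_w_of (z : C) : dot z z - 2 * dot z (w_of x y) + 1 = 0 ->
  Cmod (x - z) ^ 2 * (1 - Cmod y ^ 2) = Cmod (z - y) ^ 2 * (1 - Cmod x ^ 2).
Proof.
  intros H.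
  assert (E : (dot y y - dot x x) * (dot z z - 2 * dot z (w_of x y) + 1)
    = Cmod (z - y) ^ 2 * (1 - Cmod x ^ 2) - Cmod (x - z) ^ 2 * (1 - Cmod y ^ 2))
    by (unfold w_of; config_field).
  rewrite H, Rmult_0_r in E; lra.
Qed.

Lemma power_scaled_u_of (l : R) :
  polar_form a (RtoC l * u_of x y) (RtoC l * u_of x y)
  = dot (u_of x y) (u_of x y) * l ^ 2 - 2 * l + 1.
Proof.
  unfold polar_form.
  replace (dot (RtoC l * u_of x y) a) with (l * dot (u_of x y) a)
    by (unfold dot; autorewrite with coord; ring).
  rewrite dot_u_of_center_a; unfold dot; autorewrite with coord; ring.
Qed.

Lemma scaled_u_of_le (l : R) :
  polar_form a (RtoC l * u_of x y) (RtoC l * u_of x y) = 0 ->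
  Cmod (RtoC l * u_of x y) < 1 ->
  l * (2 - dot x x - dot y y) <= 1 - dot x x * dot y y.
Proof.
  rewrite power_scaled_u_of; intros Hq Hz1; set (u := u_of x y) in *.
  set (D := 1 - dot x x * dot y y); set (S := 2 - dot x x - dot y y).
  pose proof (dot_self_lt1 x hx1); pose proof (dot_self_lt1 y hy1).
  assert (HS : 0 < S) by (unfold S; lra).
  assert (Hq1 : dot u u * l ^ 2 < 1).
  { replace (dot u u * l ^ 2) with (dot (RtoC l * u) (RtoC l * u))
      by (unfold dot; autorewrite with coord; ring).
    now apply dot_self_lt1. }
  (* D / S lies between the two roots *)
  assert (Hm : (dot u u * (D / S) ^ 2 - 2 * (D / S) + 1) * S ^ 2
               = - ((1 - dot x x) * (1 - dot y y) * dot (x - y) (x - y)))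
    by (unfold u, u_of, D, S; config_field).
  assert (Hl : l <= D / S).
  { apply (smaller_root_le (dot u u)); try assumption; [unfold dot; nra|].
    apply (Rmult_le_reg_r (S ^ 2)); [nra|]; rewrite Hm, Rmult_0_l.
    assert (0 <= dot (x - y) (x - y)) by (unfold dot; nra).
    assert (0 <= (1 - dot x x) * (1 - dot y y)) by nra.
    nra. }
  replace D with (D / S * S) by (field; lra); nra.
Qed.

Lemma obtuse_at_scaled_u_of (l : R) :
  polar_form a (RtoC l * u_of x y) (RtoC l * u_of x y) = 0 ->
  Cmod (RtoC l * u_of x y) < 1 ->
  dot (x - RtoC l * u_of x y) (y - RtoC l * u_of x y) <= 0.
Proof.
  intros Hz Hz1; pose proof (scaled_u_of_le l Hz Hz1) as Hl.
  rewrite power_scaled_u_of in Hz.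
  assert (E : (1 - dot x x * dot y y) * dot (x - RtoC l * u_of x y) (y - RtoC l * u_of x y)
     = (1 - dot x y) * (l * (2 - dot x x - dot y y) - (1 - dot x x * dot y y))
       + (1 - dot x x * dot y y) * (dot (u_of x y) (u_of x y) * l ^ 2 - 2 * l + 1))
    by (unfold u_of; config_field).
  rewrite Hz, Rmult_0_r, Rplus_0_r in E.
  pose proof (dot_lt1 x y hx1 hy1); pose proof (dot_prod_lt1 x y hx1 hy1); nra.
Qed.

Lemma polar_w_of_u : polar_form a (w_of x y) (u_of x y) = 0.
Proof.
  unfold polar_form; rewrite dot_comm, dot_u_of_w_of, dot_u_of_center_a, dot_w_of_center_a; ring.
Qed.

Lemma center_a_neq0 : a <> 0%C.
Proof.
  intro E; pose proof radius_a_sq as H; rewrite E in H.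
  unfold dot in H; rewrite re_0, im_0 in H; nra.
Qed.

Lemma inv_pt_neq : inv_pt x <> inv_pt y.
Proof.
  apply neq_of_Cmod; rewrite !Cmod_inv_pt; intro E; apply hxy.
  rewrite <- (Rinv_inv (Cmod x)), E; apply Rinv_inv.
Qed.

Variables xs ys : C.
Hypothesis hxs1 : Cmod xs = 1.
Hypothesis hys1 : Cmod ys = 1.
Hypothesis hxsa : on_circle a (radius_a x y) xs.
Hypothesis hysa : on_circle a (radius_a x y) ys.
Hypothesis hord : arc_order4 xs x y ys.

Lemma xs_neq_ys : xs <> ys.
Proof.
  intros <-; destruct hord as [_ H].
  replace (xs - xs)%C with (RtoC 0) in H by ring; rewrite Cmod_0 in H.
  pose proof (Cmod_ge_0 (y - xs)); lra.
Qed.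

Lemma w_of_on_line_xs_ys : on_line xs ys (w_of x y).
Proof.
  apply (on_line_of_dot_eq a); auto using center_a_neq0, dot_w_of_center_a;
    apply dot_center_of_unit; auto; apply (polar_form_on_circle _ _ _ radius_a_sq); assumption.
Qed.

Lemma u_of_on_line_xs_ys : on_line xs ys (u_of x y).
Proof.
  apply (on_line_of_dot_eq a); auto using center_a_neq0, dot_u_of_center_a;
    apply dot_center_of_unit; auto; apply (polar_form_on_circle _ _ _ radius_a_sq); assumption.
Qed.

Local Ltac on_circle_a :=
  first [ apply polar_form_center_a_x | apply polar_form_center_a_y
        | apply polar_form_inv_pt; [apply x_neq0 | apply polar_form_center_a_x]
        | apply polar_form_inv_pt; [apply y_neq0 | apply polar_form_center_a_y]
        | apply (polar_form_on_circle _ _ _ radius_a_sq); assumption ].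

Local Ltac distinct :=
  first [ apply xs_neq_ys | apply not_eq_sym, xs_neq_ys
        | apply inv_pt_neq | apply not_eq_sym, inv_pt_neq
        | apply neq_of_Cmod; rewrite ?Cmod_inv_pt, ?hxs1, ?hys1;
          pose proof (inv_Cmod_gt1 x x_neq0 hx1); pose proof (inv_Cmod_gt1 y y_neq0 hy1); lra ].

Local Ltac w_of_on_line :=
  first [ apply w_of_on_line_xy | apply w_of_on_line_xs_ys | apply w_of_on_line_inv
        | apply on_line_swap; w_of_on_line ].

Lemma polar_w_of_v (v : C) : on_line x xs v -> on_line y ys v -> polar_form a (w_of x y) v = 0.
Proof.
  intros; apply (polar_form_diagonal_points a _ _ x xs y ys); auto;
    first [on_circle_a | distinct | w_of_on_line].
Qed.

Lemma polar_w_of_s (s : C) : on_line x ys s -> on_line y xs s -> polar_form a (w_of x y) s = 0.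
Proof.
  intros; apply (polar_form_diagonal_points a _ _ x ys y xs); auto;
    first [on_circle_a | distinct | w_of_on_line].
Qed.

Lemma polar_w_of_t (t : C) :
  on_line xs (inv_pt y) t -> on_line ys (inv_pt x) t -> polar_form a (w_of x y) t = 0.
Proof.
  intros; apply (polar_form_diagonal_points a _ _ xs (inv_pt y) ys (inv_pt x)); auto;
    first [on_circle_a | distinct | w_of_on_line].
Qed.

Lemma polar_w_of_k (k : C) :
  on_line xs (inv_pt x) k -> on_line ys (inv_pt y) k -> polar_form a (w_of x y) k = 0.
Proof.
  intros; apply (polar_form_diagonal_points a _ _ xs (inv_pt x) ys (inv_pt y)); auto;
    first [on_circle_a | distinct | w_of_on_line].
Qed.

Variables (rw : R) (z : C).
Hypothesis hrw : 0 < rw.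
Hypothesis hworth : orthogonal (w_of x y) rw a (radius_a x y).
Hypothesis hzw : on_circle (w_of x y) rw z.
Hypothesis hza : on_circle a (radius_a x y) z.
Hypothesis hz1 : Cmod z < 1.

Lemma radius_w_sq : rw ^ 2 = dot (w_of x y) (w_of x y) - 1.
Proof.
  pose proof hworth as H; unfold orthogonal in H; rewrite Cmod_sq_dot, radius_a_sq in H.
  pose proof dot_w_of_center_a; unfold dot in *; autorewrite with coord in H; lra.
Qed.

Lemma orthogonal_w_of_unit : orthogonal (w_of x y) rw 0 1.
Proof.
  unfold orthogonal; rewrite Cmod_sq_dot, radius_w_sq; unfold dot; autorewrite with coord; ring.
Qed.

Lemma radius_w_eq : rw = Cmod (x - y) * sqrt ((1 - Cmod x ^ 2) * (1 - Cmod y ^ 2))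
                         / Rabs (Cmod y ^ 2 - Cmod x ^ 2).
Proof.
  apply Rsqr_inj; [lra| |rewrite !Rsqr_pow2, radius_w_sq; apply dot_w_of_sub1].
  apply Rmult_le_pos; [apply Rmult_le_pos; [apply Cmod_ge_0 | apply sqrt_pos]|].
  apply Rlt_le, Rinv_0_lt_compat, Rabs_pos_lt; intro E; apply hxy.
  apply Rsqr_inj; try apply Cmod_ge_0; rewrite !Rsqr_pow2; lra.
Qed.

Lemma power_circle_w_of_z : dot z z - 2 * dot z (w_of x y) + 1 = 0.
Proof.
  assert (E : Cmod (z - w_of x y) ^ 2 = rw ^ 2) by now rewrite hzw.
  rewrite radius_w_sq, Cmod_sq_dot in E; unfold dot in *; autorewrite with coord in E; lra.
Qed.

Lemma w_of_neq_center_a : w_of x y <> a.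
Proof.
  intro E; pose proof hworth as H; unfold orthogonal in H; rewrite E in H.
  replace (a - a)%C with (RtoC 0) in H by ring; rewrite Cmod_0 in H; nra.
Qed.

Lemma polar_w_of_z : polar_form a (w_of x y) z = 0.
Proof.
  pose proof power_circle_w_of_z; pose proof (polar_form_on_circle _ _ _ radius_a_sq hza);
    pose proof dot_w_of_center_a; unfold polar_form, dot in *; lra.
Qed.

Lemma on_line_0_z (P : C) : polar_form a (w_of x y) P = 0 -> on_line 0 z P.
Proof.
  apply (on_line_0_of_polar a); auto using dot_w_of_center_a, w_of_neq_center_a, polar_w_of_z.
Qed.

Lemma z_hyp_midpoint : hyp_midpoint a (radius_a x y) x y z.
Proof.
  split; [split; [exact hza | split; [exact hz1 |]] |].
  - assert (Hu : u_of x y <> 0%C).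
    { intro E; pose proof dot_u_of_center_a as H; rewrite E in H.
      unfold dot in H; rewrite re_0, im_0 in H; lra. }
    assert (Hl : on_line 0 (u_of x y) z)
      by (apply (on_line_0_of_polar a (w_of x y));
          auto using dot_w_of_center_a, w_of_neq_center_a, polar_w_of_z, polar_w_of_u).
    destruct (on_line_param _ _ _ (not_eq_sym Hu) Hl) as [l Hz].
    replace (0 + RtoC l * (u_of x y - 0))%C with (RtoC l * u_of x y)%C in Hz by ring.
    apply chord_le_of_obtuse; rewrite Hz; apply obtuse_at_scaled_u_of; rewrite <- Hz; auto.
    apply (polar_form_on_circle _ _ _ radius_a_sq hza).
  - apply hdist_eq_of_apollonius, apollonius_w_of, power_circle_w_of_z; assumption.
Qed.

End Configuration.

Theorem lemma4p6 (x y : C)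
  (hx0 : x <> 0%C) (hy0 : y <> 0%C)
  (hx1 : Cmod x < 1) (hy1 : Cmod y < 1)
  (hnc : ~ on_line 0%C x y)
  (hxy : Cmod x <> Cmod y)
  (xs ys : C)
  (hxs1 : Cmod xs = 1) (hys1 : Cmod ys = 1)
  (hxsa : on_circle (center_a x y) (radius_a x y) xs)
  (hysa : on_circle (center_a x y) (radius_a x y) ys)
  (hord : arc_order4 xs x y ys)
  (w u v s t k : C)
  (hw1 : on_line x y w) (hw2 : on_line (inv_pt x) (inv_pt y) w)
  (hu1 : on_line x (inv_pt y) u) (hu2 : on_line y (inv_pt x) u)
  (hv1 : on_line x xs v) (hv2 : on_line y ys v)
  (hs1 : on_line x ys s) (hs2 : on_line y xs s)
  (ht1 : on_line xs (inv_pt y) t) (ht2 : on_line ys (inv_pt x) t)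
  (hk1 : on_line xs (inv_pt x) k) (hk2 : on_line ys (inv_pt y) k)
  (rw : R) (hrw : 0 < rw)
  (hworth : orthogonal w rw (center_a x y) (radius_a x y))
  (z : C)
  (hzw : on_circle w rw z) (hza : on_circle (center_a x y) (radius_a x y) z)
  (hz1 : Cmod z < 1) :
  (orthogonal w rw 0%C 1
   /\ hyp_midpoint (center_a x y) (radius_a x y) x y z
   /\ w = ((y * RtoC (1 - Cmod x ^ 2) - x * RtoC (1 - Cmod y ^ 2))
             / RtoC (Cmod y ^ 2 - Cmod x ^ 2))%C
   /\ rw = Cmod (x - y)%C * sqrt ((1 - Cmod x ^ 2) * (1 - Cmod y ^ 2))
             / Rabs (Cmod y ^ 2 - Cmod x ^ 2))
  /\
  (on_line 0%C z v /\ on_line 0%C z s /\ on_line 0%C z t /\ on_line 0%C z k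
   /\ on_line 0%C z u /\ on_line xs ys u
   /\ u = ((y * RtoC (1 - Cmod x ^ 2) + x * RtoC (1 - Cmod y ^ 2))
             / RtoC (1 - Cmod x ^ 2 * Cmod y ^ 2))%C).
Proof.
  assert (hcross : cross x y <> 0) by (intro E; apply hnc, on_line_0, E).
  pose proof (w_of_unique x y hcross hx1 hy1 hxy w hw1 hw2) as ->.
  pose proof (u_of_unique x y hcross hx1 hy1 hxy u hu1 hu2) as ->.
  pose proof (on_line_0_z x y hcross hx1 hy1 hxy rw z hrw hworth hzw hza) as Hpolar.
  refine (conj (conj _ (conj _ (conj eq_refl _)))
               (conj _ (conj _ (conj _ (conj _ (conj _ (conj _ eq_refl))))))).
  - apply (orthogonal_w_of_unit x y hcross hx1 hy1 hxy rw); assumption.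
  - apply (z_hyp_midpoint x y hcross hx1 hy1 hxy rw); assumption.
  - apply (radius_w_eq x y hcross hx1 hy1 hxy rw); assumption.
  - apply Hpolar, (polar_w_of_v x y hcross hx1 hy1 hxy xs ys); assumption.
  - apply Hpolar, (polar_w_of_s x y hcross hx1 hy1 hxy xs ys); assumption.
  - apply Hpolar, (polar_w_of_t x y hcross hx1 hy1 hxy xs ys); assumption.
  - apply Hpolar, (polar_w_of_k x y hcross hx1 hy1 hxy xs ys); assumption.
  - apply Hpolar, polar_w_of_u; assumption.
  - apply (u_of_on_line_xs_ys x y hcross hx1 hy1 hxy xs ys); assumption.
Qed.
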